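(* Let $S$ be a modal left $E$-monoid, and let $E'\subseteq E(S)$ with a bijection $E\to E'$, $e\mapsto e'$, such that $e\sim_r e'$ for all $e\in E$. Then $1\in E'$, $S$ is a modal left $E'$-monoid, and its left $E'$-modal operation satisfies $s\cdot e'=(s\cdot e)'$ for all $s\in S$, $e\in E$. If $S$ is an inductive left $E$-monoid, then it is an inductive left $E'$-monoid and $(e\wedge f)'=e'\wedge f'$ for all $e,f\in E$.
   Context: For a semigroup $S$, $E(S)$ is its set of idempotents; for $e,f\in E(S)$, $e\le_r f$ iff $e=ef$, and $e\sim_r f$ iff $e\le_r f$ and $f\le_r e$. $E\subseteq E(S)$ is right pre-reduced if $e=ef$ and $f=fe$ imply $e=f$ for $e,f\in E$. Let $S$ be a monoid and $1\in E\subseteq E(S)$. $S$ is a modal left $E$-monoid if $E$ is right pre-reduced and (I1') for all $t\in S$, $e\in E$ there is $t\cdot e\in E$ such that for all $s\in S$: $ste=st$ iff $s(t\cdot e)=s$; the (necessarily unique) map $(t,e)\mapsto t\cdot e$ is the left $E$-modal operation. $S$ is an inductive left $E$-monoid if it is a modal left $E$-monoid, $(E,\le_r)$ is a meet-semilattice with meet $\wedge$, and (I2') for $s\in S$, $e,f\in E$: $se=sf=s$ implies $s(e\wedge f)=s$. *)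

Section Defs.
Context {S : Type} (mul : S -> S -> S) (one : S).

Definition is_monoid : Prop :=
  (forall x y z, mul x (mul y z) = mul (mul x y) z) /\
  (forall x, mul one x = x) /\ (forall x, mul x one = x).

Definition idempotent (e : S) : Prop := mul e e = e.

Definition le_r (e f : S) : Prop := e = mul e f.

Definition sim_r (e f : S) : Prop := le_r e f /\ le_r f e.

Definition right_pre_reduced (E : S -> Prop) : Prop :=
  forall e f, E e -> E f -> e = mul e f -> f = mul f e -> e = f.

Definition is_modal_op (E : S -> Prop) (op : S -> S -> S) : Prop :=
  forall t e, E e ->
    E (op t e) /\
    (forall s, mul (mul s t) e = mul s t <-> mul s (op t e) = s).

Definition modal_left_monoid (E : S -> Prop) : Prop :=
  E one /\ (forall e, E e -> idempotent e) /\
  right_pre_reduced E /\ exists op, is_modal_op E op.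

Definition is_meet (E : S -> Prop) (m : S -> S -> S) : Prop :=
  forall e f, E e -> E f ->
    E (m e f) /\ le_r (m e f) e /\ le_r (m e f) f /\
    (forall g, E g -> le_r g e -> le_r g f -> le_r g (m e f)).

Definition I2 (E : S -> Prop) (m : S -> S -> S) : Prop :=
  forall s e f, E e -> E f -> mul s e = s -> mul s f = s -> mul s (m e f) = s.

Definition inductive_left_monoid (E : S -> Prop) : Prop :=
  modal_left_monoid E /\ exists m, is_meet E m /\ I2 E m.

End Defs.

From Stdlib Require Import ClassicalEpsilon.

(* The key observation is that two r-equivalent elements a ~_r b have the same
   right stabiliser ({s | s a = s} = {s | s b = s}), and hence <=_r is
   invariant under ~_r in both arguments.  Every defining condition of a modal
   or inductive left E-monoid is phrased through right stabilisers and <=_r,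
   so each of them transfers from E to E' along e |-> e' and an inverse
   x |-> x^ of it: the transported operations are t.x := (t.x^)' and
   x /\' y := (x^ /\ y^)'.  Finally, left modal operations and meets are
   unique on a right pre-reduced set, so the operations on E' provided in the
   statement coincide with the transported ones, which gives the stated
   compatibility formulas. *)

Section SimR.
Context {S : Type} (mul : S -> S -> S).
Hypothesis assoc : forall x y z, mul x (mul y z) = mul (mul x y) z.

Lemma sim_r_sym a b : sim_r mul a b -> sim_r mul b a.
Proof. intros [Hab Hba]; split; assumption. Qed.

Lemma right_stab_sim_r a b s :
  sim_r mul a b -> (mul s a = s <-> mul s b = s).
Proof.
  intros [Hab Hba]; unfold le_r in *; split; intro Hs.
  - rewrite <- Hs at 1. rewrite <- assoc, <- Hab. exact Hs.
  - rewrite <- Hs at 1. rewrite <- assoc, <- Hba. exact Hs.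
Qed.

Lemma le_r_sim_r a a' b b' :
  sim_r mul a a' -> sim_r mul b b' -> le_r mul a b -> le_r mul a' b'.
Proof.
  intros [Haa' Ha'a] Hbb' Hab; unfold le_r in *.
  assert (Ha'b : a' = mul a' b).
  { rewrite Ha'a at 1. rewrite Hab, assoc, <- Ha'a. reflexivity. }
  symmetry. apply (right_stab_sim_r b b' a' Hbb'). symmetry. exact Ha'b.
Qed.
End SimR.

Lemma sim_r_one_eq {S : Type} (mul : S -> S -> S) (one x : S) :
  (forall y, mul one y = y) -> sim_r mul one x -> x = one.
Proof. intros L1 [H _]; unfold le_r in H. rewrite L1 in H. symmetry; exact H. Qed.

Lemma modal_op_unique {S : Type} (mul : S -> S -> S) (E : S -> Prop)
    (op op' : S -> S -> S) :
  (forall e, E e -> idempotent mul e) -> right_pre_reduced mul E ->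
  is_modal_op mul E op -> is_modal_op mul E op' ->
  forall t e, E e -> op t e = op' t e.
Proof.
  intros Hid Hrpr Hop Hop' t e He.
  destruct (Hop t e He) as [HE HI]; destruct (Hop' t e He) as [HE' HI'].
  assert (same : forall s, mul s (op t e) = s <-> mul s (op' t e) = s).
  { intro s. rewrite <- HI, <- HI'. reflexivity. }
  apply Hrpr; auto; unfold le_r; symmetry.
  - apply same, Hid, HE.
  - apply same, Hid, HE'.
Qed.

Lemma meet_unique {S : Type} (mul : S -> S -> S) (E : S -> Prop)
    (m m' : S -> S -> S) :
  right_pre_reduced mul E -> is_meet mul E m -> is_meet mul E m' ->
  forall e f, E e -> E f -> m e f = m' e f.
Proof.
  intros Hrpr Hm Hm' e f He Hf.
  destruct (Hm e f He Hf) as [M1 [M2 [M3 M4]]].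
  destruct (Hm' e f He Hf) as [N1 [N2 [N3 N4]]].
  apply Hrpr; [exact M1 | exact N1 | apply N4 | apply M4]; assumption.
Qed.

Section Transfer.
Context {S : Type} (mul : S -> S -> S) (E E' : S -> Prop) (g h : S -> S).
Hypothesis assoc : forall x y z, mul x (mul y z) = mul (mul x y) z.
Hypothesis g_sim : forall e, E e -> sim_r mul e (g e).
Hypothesis g_E' : forall e, E e -> E' (g e).
Hypothesis h_inv : forall x, E' x -> E (h x) /\ g (h x) = x.

Lemma h_E x : E' x -> E (h x).
Proof. intro Hx; apply (h_inv x Hx). Qed.

Lemma h_sim x : E' x -> sim_r mul x (h x).
Proof.
  intro Hx; destruct (h_inv x Hx) as [HE Hg].
  apply sim_r_sym. rewrite <- Hg at 2. apply g_sim, HE.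
Qed.

Lemma rpr_transfer : right_pre_reduced mul E -> right_pre_reduced mul E'.
Proof.
  intros Hrpr x y Hx Hy Hxy Hyx.
  destruct (h_inv x Hx) as [Ex gx]; destruct (h_inv y Hy) as [Ey gy].
  rewrite <- gx, <- gy. f_equal. apply Hrpr; auto.
  - exact (le_r_sim_r mul assoc _ _ _ _ (h_sim x Hx) (h_sim y Hy) Hxy).
  - exact (le_r_sim_r mul assoc _ _ _ _ (h_sim y Hy) (h_sim x Hx) Hyx).
Qed.

Lemma modal_op_transfer op :
  is_modal_op mul E op -> is_modal_op mul E' (fun t x => g (op t (h x))).
Proof.
  intros Hop t x Hx.
  destruct (Hop t (h x) (h_E x Hx)) as [Ho HI]. split; [auto|].
  intro s.
  rewrite (right_stab_sim_r mul assoc _ _ (mul s t) (h_sim x Hx)), HI.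
  apply (right_stab_sim_r mul assoc _ _ s (g_sim _ Ho)).
Qed.

Lemma meet_transfer m :
  is_meet mul E m -> is_meet mul E' (fun x y => g (m (h x) (h y))).
Proof.
  intros Hm x y Hx Hy.
  pose proof (h_sim x Hx) as Sx; pose proof (h_sim y Hy) as Sy.
  destruct (Hm _ _ (h_E x Hx) (h_E y Hy)) as [M1 [M2 [M3 M4]]].
  pose proof (g_sim _ M1) as Sm.
  split; [auto|]. split; [|split].
  - exact (le_r_sim_r mul assoc _ _ _ _ Sm (sim_r_sym mul _ _ Sx) M2).
  - exact (le_r_sim_r mul assoc _ _ _ _ Sm (sim_r_sym mul _ _ Sy) M3).
  - intros z Hz Hzx Hzy. pose proof (h_sim z Hz) as Sz.
    apply (le_r_sim_r mul assoc _ _ _ _ (sim_r_sym mul _ _ Sz) Sm).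
    apply M4; [exact (h_E z Hz)| |].
    + exact (le_r_sim_r mul assoc _ _ _ _ Sz Sx Hzx).
    + exact (le_r_sim_r mul assoc _ _ _ _ Sz Sy Hzy).
Qed.

Lemma I2_transfer m :
  is_meet mul E m -> I2 mul E m -> I2 mul E' (fun x y => g (m (h x) (h y))).
Proof.
  intros Hm HI2 s x y Hx Hy Hsx Hsy.
  destruct (Hm _ _ (h_E x Hx) (h_E y Hy)) as [M1 _].
  apply (right_stab_sim_r mul assoc _ _ s (g_sim _ M1)).
  apply HI2; [exact (h_E x Hx) | exact (h_E y Hy) | |].
  - apply (right_stab_sim_r mul assoc _ _ s (h_sim x Hx)), Hsx.
  - apply (right_stab_sim_r mul assoc _ _ s (h_sim y Hy)), Hsy.
Qed.
End Transfer.

Theorem proposition5p5 (S : Type) (mul : S -> S -> S) (one : S)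
  (E E' : S -> Prop) (g : S -> S) :
  is_monoid mul one ->
  modal_left_monoid mul one E ->
  (forall e, E' e -> idempotent mul e) ->
  (* g restricts to a bijection E -> E', e |-> e' *)
  (forall e, E e -> E' (g e)) ->
  (forall e f, E e -> E f -> g e = g f -> e = f) ->
  (forall e', E' e' -> exists e, E e /\ g e = e') ->
  (forall e, E e -> sim_r mul e (g e)) ->
  E' one /\
  modal_left_monoid mul one E' /\
  (forall op op', is_modal_op mul E op -> is_modal_op mul E' op' ->
     forall s e, E e -> op' s (g e) = g (op s e)) /\
  (inductive_left_monoid mul one E ->
     inductive_left_monoid mul one E' /\
     (forall m m', is_meet mul E m -> is_meet mul E' m' ->
        forall e f, E e -> E f -> g (m e f) = m' (g e) (g f))).
Proof.
  intros [assoc [L1 _]] [E1 [_ [Erpr [op Hop]]]] Hid HgE Hinj Hsurj Hsim.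
  set (h := fun x => epsilon (inhabits one) (fun e => E e /\ g e = x)).
  assert (Hh : forall x, E' x -> E (h x) /\ g (h x) = x).
  { intros x Hx. apply epsilon_spec, Hsurj, Hx. }
  assert (hg : forall e, E e -> h (g e) = e).
  { intros e He. destruct (Hh (g e) (HgE e He)) as [HE Hg]. apply Hinj; auto. }
  assert (E'1 : E' one).
  { rewrite <- (sim_r_one_eq mul one (g one) L1 (Hsim one E1)). auto. }
  pose proof (rpr_transfer mul E E' g h assoc Hsim Hh Erpr) as rpr'.
  assert (modal' : modal_left_monoid mul one E').
  { repeat split; auto. eexists. apply (modal_op_transfer mul E E' g h); eauto. }
  split; [exact E'1|]. split; [exact modal'|]. split.
  - intros op1 op' Hop1 Hop' s e He.
    rewrite <- (modal_op_unique mul E' _ _ Hid rpr'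
                 (modal_op_transfer mul E E' g h assoc Hsim HgE Hh op1 Hop1)
                 Hop' s (g e) (HgE e He)).
    rewrite hg; auto.
  - intros [_ [m [Hmeet HI2]]]. split.
    + split; [exact modal'|]. eexists. split.
      * apply (meet_transfer mul E E' g h); eauto.
      * apply (I2_transfer mul E E' g h); eauto.
    + intros m1 m' Hm1 Hm' e f He Hf.
      rewrite <- (meet_unique mul E' _ _ rpr'
                   (meet_transfer mul E E' g h assoc Hsim HgE Hh m1 Hm1)
                   Hm' (g e) (g f) (HgE e He) (HgE f Hf)).
      rewrite !hg; auto.
Qed.
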